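(* Let $\tau$, $\phi$ be as follows: $\tau:\mathbb{F}_p((t))^d\to\mathbb{F}_p((t))^d$, $(f_1,\dots,f_d)\mapsto(tf_1,\dots,tf_d)$, and $\phi:\mathbb{F}_p((t))\to\mathrm{Aut}(\mathbb{F}_p((t))^d)$ a continuous homomorphism with $\phi(tf)=\tau\circ\phi(f)\circ\tau^{-1}$ for all $f$, such that the block matrix of $\phi(f)$ is lower triangular ($\phi(f)_{i,j}=0$ for $j>i$) for every $f$. Let $\mathcal{A}$ be the subalgebra of $\mathrm{End}(\mathbb{F}_p((t))^d)$ generated by $\{\phi(t^r)-\mathrm{Id}:r\in\mathbb{Z}\}$, and suppose there is $N\in\mathbb{N}$ with $\mathcal{A}^N=\{0\}$. Then there is $\xi\in\mathbb{F}_p((t))^d\setminus\{0\}$ with $\phi(t^n)(\xi)=\xi$ for every $n\in\mathbb{Z}$.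
   Context: $\mathcal{A}^N=\{a_1\cdots a_N: a_1,\dots,a_N\in\mathcal{A}\}$. $\mathrm{Aut}(\mathbb{F}_p((t))^d)$ has the Braconnier topology; $\mathrm{End}$ denotes continuous additive endomorphisms. For $n\in\mathbb{Z}$, $\mathbb{V}_n=\{(a_1t^n,\dots,a_dt^n):a_r\in\mathbb{F}_p\}$, $\pi_n$ the projection onto $\mathbb{V}_n$ taking $t^n$-coefficients, and $A_{i,j}=\pi_i\circ A|_{\mathbb{V}_j}$. *)

(* Laurent series over F_p, i.e. F_p((t))^d, encoded as
   coefficient functions int -> 'I_d -> 'F_p with support bounded below. *)
From HB Require Import structures.
From mathcomp Require Import all_boot all_order all_algebra.
Set Implicit Arguments. Unset Strict Implicit. Unset Printing Implicit Defensive.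
Import Order.TTheory GRing.Theory Num.Theory.
Local Open Scope ring_scope.

Section LaurentSeries.
Variables (p d : nat).

(* x = sum_n (x n) t^n, with x n in F_p^d *)
Definition lbounded (x : int -> 'I_d -> 'F_p) :=
  exists m : int, forall n : int, n < m -> forall i, x n i = 0.

(* F_p((t))^d ;  F_p((t)) itself is LS p 1 *)
Definition LS := {x : int -> 'I_d -> 'F_p | lbounded x}.

Definition coef (x : LS) (n : int) (i : 'I_d) : 'F_p := proj1_sig x n i.

Lemma lb0 : lbounded (fun _ _ => 0).
Proof. by exists 0. Qed.
Definition ls0 : LS := exist _ _ lb0.

Lemma lbadd (x y : LS) : lbounded (fun n i => coef x n i + coef y n i).
Proof.
case: x => x [mx Hx]; case: y => y [my Hy]; exists (Num.min mx my) => n Hn i.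
rewrite /coef /= Hx ?Hy ?addr0 //.
- by apply: (lt_le_trans Hn); rewrite ge_min lexx orbT.
- by apply: (lt_le_trans Hn); rewrite ge_min lexx.
Qed.
Definition lsadd (x y : LS) : LS := exist _ _ (lbadd x y).

Lemma lbopp (x : LS) : lbounded (fun n i => - coef x n i).
Proof. case: x => x [m Hx]; exists m => n Hn i; by rewrite /coef /= Hx ?oppr0. Qed.
Definition lsopp (x : LS) : LS := exist _ _ (lbopp x).

Definition lssub (x y : LS) : LS := lsadd x (lsopp y).

(* multiplication by t:  (t x)_n = x_(n-1)  (this is tau on F_p((t))^d,
   and multiplication by t on F_p((t)) when d = 1) *)
Lemma lbshift (x : LS) : lbounded (fun n i => coef x (n - 1) i).
Proof.
case: x => x [m Hx]; exists (m + 1) => n Hn i; rewrite /coef /= Hx //.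
by rewrite ltrBlDr.
Qed.
Definition lsshift (x : LS) : LS := exist _ _ (lbshift x).

Lemma lbunshift (x : LS) : lbounded (fun n i => coef x (n + 1) i).
Proof.
case: x => x [m Hx]; exists (m - 1) => n Hn i; rewrite /coef /= Hx //.
by rewrite -ltrBrDr.
Qed.
Definition lsunshift (x : LS) : LS := exist _ _ (lbunshift x).

(* x lies in t^k F_p[[t]]^d  (basic t-adic neighbourhoods of 0) *)
Definition inball (k : int) (x : LS) := forall n : int, n < k -> forall i, coef x n i = 0.

Definition continuous_ls (a : LS -> LS) :=
  forall (x : LS) (n : int), exists m : int,
    forall y, inball m (lssub y x) -> inball n (lssub (a y) (a x)).

Definition additive_ls (a : LS -> LS) := forall x y, a (lsadd x y) = lsadd (a x) (a y).

Definition isAut (a : LS -> LS) :=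
  [/\ additive_ls a, continuous_ls a &
      exists b : LS -> LS, [/\ cancel a b, cancel b a & continuous_ls b]].

(* V_j = { (a_1 t^j, ..., a_d t^j) } *)
Definition inV (j : int) (x : LS) := forall n : int, n != j -> forall i, coef x n i = 0.

(* block matrix lower triangular: A_{i,j} = pi_i o A|_{V_j} = 0 for j > i *)
Definition lower_triangular (a : LS -> LS) :=
  forall (i j : int) (x : LS), i < j -> inV j x -> forall k, coef (a x) i k = 0.

End LaurentSeries.

Arguments ls0 {p d}.

Section Phi.
Variables (p d : nat).

Lemma lbtpow (r : int) : lbounded (fun (n : int) (_ : 'I_1) => (if n == r then 1 else 0 : 'F_p)).
Proof. exists r => n Hn i; by rewrite lt_eqF. Qed.
Definition tpow (r : int) : LS p 1 := exist _ _ (lbtpow r).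

Variable phi : LS p 1 -> (LS p d -> LS p d).

(* continuity of phi : F_p((t)) -> Aut(F_p((t))^d), Braconnier topology,
   at 0 (equivalent to continuity everywhere for a homomorphism).
   Basic identity neighbourhoods: A(K,U) = {a | a x - x in U and a^-1 x - x in U
   for x in K}, with K = t^-m F_p[[t]]^d (every compact set lies in one) and
   U = t^n F_p[[t]]^d. The a^-1 condition is written as: a y in K -> y - a y in U. *)
Definition phi_continuous :=
  forall m n : int, exists k : int, forall f : LS p 1, inball k f ->
    (forall x, inball (- m) x -> inball n (lssub (phi f x) x)) /\
    (forall y, inball (- m) (phi f y) -> inball n (lssub y (phi f y))).

(* the (non-unital) F_p-subalgebra of End generated by phi(t^r) - Id *)
Inductive inA : (LS p d -> LS p d) -> Prop :=
  | inA_gen (r : int) : inA (fun x => lssub (phi (tpow r) x) x)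
  | inA_zero : inA (fun _ => ls0)
  | inA_add a b : inA a -> inA b -> inA (fun x => lsadd (a x) (b x))
  | inA_opp a : inA a -> inA (fun x => lsopp (a x))
  | inA_mul a b : inA a -> inA b -> inA (a \o b).

Definition nilpotent_of_order (N : nat) :=
  forall a : nat -> (LS p d -> LS p d), (forall i, (i < N)%N -> inA (a i)) ->
    forall x, foldr (fun f g => f \o g) id [seq a i | i <- iota 0 N] x = ls0.

End Phi.

(* The fixed vector is produced by the nilpotency of A alone.  Let N be the
   least exponent with A^N = {0}; it is positive because A^0 is the identity
   on the nonzero space F_p((t))^d.  By minimality some product
   a_0 o ... o a_(N-2) of elements of A takes a nonzero value xi at some x.
   For every n, phi(t^n) - Id lies in A, so (phi(t^n) - Id) o a_0 o ... o a_(N-2)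
   is a product of N elements of A and vanishes; hence phi(t^n) xi = xi. *)
From HB Require Import structures.
From mathcomp Require Import all_boot all_order all_algebra.
From Stdlib Require Import Classical FunctionalExtensionality ProofIrrelevance.
Import Order.TTheory GRing.Theory Num.Theory.
Local Open Scope ring_scope.

Section LaurentFacts.
Variables (p d : nat).

Lemma ls_ext (x y : LS p d) : (forall n i, coef x n i = coef y n i) -> x = y.
Proof.
case: x => x hx; case: y => y hy /= Hxy.
have Exy : x = y.
  by apply: functional_extensionality => n; apply: functional_extensionality.
by subst y; congr exist; apply: proof_irrelevance.
Qed.

Lemma lssub_eq0 (x y : LS p d) : lssub y x = ls0 -> y = x.
Proof.
move=> Hyx; apply: ls_ext => n i.
have /eqP := congr1 (fun z => coef z n i) Hyx.
by rewrite /lssub /lsadd /lsopp /coef /= subr_eq0 => /eqP.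
Qed.

Lemma ls_nontrivial : (0 < d)%N -> exists x : LS p d, x <> ls0.
Proof.
move=> d_gt0; pose i0 : 'I_d := Ordinal d_gt0.
have lb_e0 : lbounded (fun (n : int) (i : 'I_d) =>
    (if (n == 0) && (i == i0) then 1 else 0 : 'F_p)).
  by exists 0 => n Hn i; rewrite lt_eqF.
exists (exist _ _ lb_e0) => He0.
have /eqP := congr1 (fun z => coef z 0 i0) He0.
by rewrite /coef /= oner_eq0.
Qed.

Definition comp_prod (a : nat -> LS p d -> LS p d) (N : nat) : LS p d -> LS p d :=
  foldr (fun f g => f \o g) id [seq a i | i <- iota 0 N].

Lemma comp_prodS (a : nat -> LS p d -> LS p d) (N : nat) :
  comp_prod a N.+1 = a 0%N \o comp_prod (a \o succn) N.
Proof. by rewrite /comp_prod /= -(addn0 1%N) iotaDl -map_comp. Qed.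

End LaurentFacts.

Arguments comp_prod {p d}.
Arguments ls_nontrivial {p d}.

Section Nilpotency.
Variables (p d : nat) (phi : LS p 1 -> (LS p d -> LS p d)).

Lemma not_nilpotent_of_order0 :
  (exists x : LS p d, x <> ls0) -> ~ nilpotent_of_order phi 0.
Proof.
case=> x Hx Hnil; apply: Hx.
exact: (Hnil (fun _ => id) (fun i (Hi : (i < 0)%N) => False_ind _ (notF Hi)) x).
Qed.

Lemma nilpotent_of_order_minimal (N : nat) :
  nilpotent_of_order phi N -> ~ nilpotent_of_order phi 0 ->
  exists M : nat, nilpotent_of_order phi M.+1 /\ ~ nilpotent_of_order phi M.
Proof.
elim: N => [|N IHN] HN Hnot0; first by [].
have [HN'|HN'] := classic (nilpotent_of_order phi N); first exact: IHN.
by exists N.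
Qed.

Lemma not_nilpotent_witness (M : nat) : ~ nilpotent_of_order phi M ->
  exists (a : nat -> LS p d -> LS p d) (x : LS p d),
    (forall i, (i < M)%N -> inA phi (a i)) /\ comp_prod a M x <> ls0.
Proof.
move=> HM; apply: NNPP => Hno; apply: HM => a Ha x.
apply: NNPP => Hax; apply: Hno.
by exists a; exists x.
Qed.

(* If A^(M+1) = {0}, the image of any product of M elements of A is fixed by
   every phi(t^n): composing on the left with phi(t^n) - Id in A gives 0. *)
Lemma product_image_fixed (M : nat) (a : nat -> LS p d -> LS p d) :
  nilpotent_of_order phi M.+1 -> (forall i, (i < M)%N -> inA phi (a i)) ->
  forall (x : LS p d) (n : int),
    phi (tpow p n) (comp_prod a M x) = comp_prod a M x.
Proof.
move=> Hnil Ha x n.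
pose b i := if i is j.+1 then a j else (fun y => lssub (phi (tpow p n) y) y).
have Hb i : (i < M.+1)%N -> inA phi (b i).
  by case: i => [|i] Hi; [exact: inA_gen | exact: Ha].
apply: lssub_eq0; have := Hnil b Hb x.
by rewrite -/(comp_prod b M.+1) comp_prodS.
Qed.

End Nilpotency.

Arguments not_nilpotent_of_order0 {p d}.
Arguments nilpotent_of_order_minimal {p d phi N}.
Arguments not_nilpotent_witness {p d phi M}.
Arguments product_image_fixed {p d phi M a}.

Theorem mainTheorem16 (p d : nat) (p_prime : prime p) (d_gt0 : (0 < d)%N)
  (phi : LS p 1 -> (LS p d -> LS p d))
  (phi_aut : forall f, isAut (phi f))
  (phi_hom : forall f g, phi (lsadd f g) = phi f \o phi g)
  (phi_cont : phi_continuous phi)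
  (phi_tau : forall f, phi (@lsshift p 1 f) = @lsshift p d \o phi f \o @lsunshift p d)
  (phi_tri : forall f, lower_triangular (phi f))
  (A_nil : exists N : nat, nilpotent_of_order phi N) :
  exists xi : LS p d, xi <> ls0 /\ forall n : int, phi (tpow p n) xi = xi.
Proof.
have Hnot0 := not_nilpotent_of_order0 phi (ls_nontrivial d_gt0).
case: A_nil => N HN.
have [M [HM1 HM]] := nilpotent_of_order_minimal HN Hnot0.
have [a [x [Ha Hax]]] := not_nilpotent_witness HM.
exists (comp_prod a M x); split; first exact: Hax.
exact: product_image_fixed HM1 Ha x.
Qed.
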